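(* Every multiset $A$ of $n$ real numbers with at least two distinct elements contains, as a submultiset, $m$ copies of a set of size $r$ for some positive integers $m,r$ with $r\ge2$ and $mr^3\ge M(A)/\log n$.
   Context: For a multiset $A$ of $n$ reals, its multiplicity profile $\mu(A)=(\mu_1,\ldots,\mu_\ell)$ is the partition of $n$ such that the $\ell$ distinct elements of $A$ occur with multiplicities $\mu_1\ge\cdots\ge\mu_\ell$, and $M(A)=\sum_{i=1}^{\ell}(i-1)^2\mu_i$. Here $\log$ is the natural logarithm. *)

From HB Require Import structures.
From mathcomp Require Import all_boot all_order all_algebra.
From mathcomp Require Import reals exp.
Set Implicit Arguments. Unset Strict Implicit. Unset Printing Implicit Defensive.
Import Order.TTheory GRing.Theory Num.Theory.

(* A multiset of elements of T is represented by a finite sequence;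
   its elements with multiplicity are the entries of the sequence. *)

Definition mult_profile (T : eqType) (A : seq T) : seq nat :=
  sort geq [seq count_mem x A | x <- undup A].

(* M(A) = sum_{i=1}^{l} (i-1)^2 mu_i ; with 0-based index i this is i^2 mu_(i). *)
Definition M (T : eqType) (A : seq T) : nat :=
  let mu := mult_profile A in
  \sum_(i < size mu) i ^ 2 * nth 0 mu i.

From HB Require Import structures.
From mathcomp Require Import all_boot all_order all_algebra.
From mathcomp Require Import reals exp.
From mathcomp Require Import ring lra zify.
Set Implicit Arguments. Unset Strict Implicit.
Import Order.TTheory GRing.Theory Num.Theory.
Local Open Scope ring_scope.

(* List the distinct elements by decreasing multiplicity mu_0 >= mu_1 >= ...
   and let B be the largest of the numbers mu_k (k+1)^3 with 1 <= k < l.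
   Then i^2 mu_i <= B / (i+1) for i >= 1, so
   M(A) <= B (1/2 + ... + 1/l) <= B log l <= B log n, and the k+1 most
   frequent elements, each taken mu_k times, form the submultiset. *)

Lemma one_sub_div_le_lnB (R : realType) (x y : R) : 0 < x -> 0 < y ->
  1 - x / y <= ln y - ln x.
Proof.
move=> x_gt0 y_gt0.
have := @le_ln1Dx R (x / y - 1).
rewrite subrKC ln_div ?posrE // ltrBrDr addNr divr_gt0 //.
by move/(_ isT); lra.
Qed.

Lemma harmonic_le_ln (R : realType) (n : nat) : (0 < n)%N ->
  \sum_(1 <= i < n) (i.+1%:R : R)^-1 <= ln n%:R.
Proof.
elim: n => // -[_ _ | n IHn _]; first by rewrite big_geq // ln1.
have step := @one_sub_div_le_lnB R n.+1%:R n.+2%:R (ltr0Sn _ _) (ltr0Sn _ _).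
have gap : 1 - n.+1%:R / n.+2%:R = (n.+2%:R : R)^-1.
  by rewrite -natr1; field; rewrite -natrD pnatr_eq0.
rewrite gap in step; rewrite big_nat_recr //= -(subrKC (ln n.+1%:R) (ln n.+2%:R)).
exact: lerD (IHn isT) step.
Qed.

Lemma weighted_sq_sum_le (R : realType) (f : nat -> nat) (l B : nat) :
  (forall i, (0 < i < l)%N -> (f i * i.+1 ^ 3 <= B)%N) ->
  ((\sum_(i < l) i ^ 2 * f i)%N%:R : R) <= B%:R * \sum_(1 <= i < l) (i.+1%:R)^-1.
Proof.
move=> f_le; case: l f_le => [|l] f_le; first by rewrite big_ord0 big_geq ?mulr0.
rewrite -(big_mkord xpredT (fun i => i ^ 2 * f i)%N) natr_sum big_ltn // mul0n add0r mulr_sumr.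
apply: ler_sum_nat => i /andP[i_gt0 i_le].
rewrite ler_pdivlMr ?ltr0n // -natrM ler_nat.
apply: leq_trans (f_le i _); last by rewrite i_gt0.
nia.
Qed.

Lemma weighted_sq_sum_le_ln (R : realType) (f : nat -> nat) (l : nat) : (1 < l)%N ->
  exists2 k, (0 < k < l)%N &
    ((\sum_(i < l) i ^ 2 * f i)%N%:R : R) <= (f k * k.+1 ^ 3)%N%:R * ln l%:R.
Proof.
move=> l_gt1.
have [k k_gt0 k_max] := @arg_maxnP _ (Ordinal l_gt1) (fun i : 'I_l => 0 < i)%N
  (fun i : 'I_l => f i * i.+1 ^ 3)%N isT.
exists k; first by rewrite k_gt0 ltn_ord.
apply: le_trans (@weighted_sq_sum_le R f l (f k * k.+1 ^ 3) _) _.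
  by move=> i /andP[i_gt0 i_lt]; exact: (k_max (Ordinal i_lt)).
by rewrite ler_wpM2l // harmonic_le_ln // ltnW.
Qed.

Section MultiplicityProfile.

Variables (T : eqType) (A : seq T).

Definition distinct_by_mult : seq T :=
  sort (relpre (fun x => count_mem x A) geq) (undup A).

Lemma perm_distinct_by_mult : perm_eq distinct_by_mult (undup A).
Proof. by rewrite perm_sort. Qed.

Lemma distinct_by_mult_uniq : uniq distinct_by_mult.
Proof. by rewrite (perm_uniq perm_distinct_by_mult) undup_uniq. Qed.

Lemma mem_distinct_by_mult x : (x \in distinct_by_mult) = (x \in A).
Proof. by rewrite (perm_mem perm_distinct_by_mult) mem_undup. Qed.

Lemma mult_profileE : mult_profile A = map (fun x => count_mem x A) distinct_by_mult.
Proof. by rewrite /mult_profile sort_map. Qed.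

Lemma size_mult_profile : size (mult_profile A) = size (undup A).
Proof. by rewrite /mult_profile size_sort size_map. Qed.

Lemma size_distinct_by_mult : size distinct_by_mult = size (undup A).
Proof. by rewrite size_sort. Qed.

Lemma mult_profile_sorted : sorted geq (mult_profile A).
Proof. by apply: sort_sorted => a b; exact: leq_total. Qed.

Lemma nth_mult_profile_gt0 k :
  (k < size (undup A))%N -> (0 < nth 0 (mult_profile A) k)%N.
Proof.
rewrite -size_mult_profile => /(mem_nth 0%N).
by rewrite {2}mult_profileE => /mapP[x x_in ->]; rewrite -has_count has_pred1
  -mem_distinct_by_mult.
Qed.

Lemma nth_mult_profile_le_count k x : x \in take k.+1 distinct_by_mult ->
  (nth 0 (mult_profile A) k <= count_mem x A)%N.
Proof.
have [k_lt | k_ge] := ltnP k (size distinct_by_mult); last first.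
  by rewrite nth_default // size_mult_profile -size_distinct_by_mult.
case/(nthP x) => j; rewrite size_takel // ltnS => j_le <-.
rewrite nth_take // -(nth_map x 0%N (fun x => count_mem x A)) ?(leq_ltn_trans j_le) //.
rewrite -mult_profileE.
apply: (sorted_leq_nth (rev_trans leq_trans) leqnn 0%N mult_profile_sorted) => //.
all: by rewrite inE size_mult_profile -size_distinct_by_mult ?(leq_ltn_trans j_le).
Qed.

End MultiplicityProfile.

Theorem proposition2p9 (R : realType) (A : seq R) :
  (1 < size (undup A))%N ->
  exists (S : seq R) (m : nat),
    [/\ uniq S, (2 <= size S)%N, (0 < m)%N,
        all (fun x => (m <= count_mem x A)%N) S &
        (M A)%:R / ln ((size A)%:R : R) <= ((m * size S ^ 3)%N)%:R].
Proof.
move=> distinct_gt1; set mu := mult_profile A.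
have mu_gt1 : (1 < size mu)%N by rewrite size_mult_profile.
have [k /andP[k_gt0 k_lt] M_le] := @weighted_sq_sum_le_ln R (nth 0%N mu) _ mu_gt1.
have k_lt' : (k < size (distinct_by_mult A))%N.
  by rewrite size_distinct_by_mult -size_mult_profile.
exists (take k.+1 (distinct_by_mult A)), (nth 0%N mu k); split.
- by rewrite take_uniq // distinct_by_mult_uniq.
- by rewrite size_takel.
- by rewrite nth_mult_profile_gt0 // -size_mult_profile.
- by apply/allP => x; exact: nth_mult_profile_le_count.
have mu_le : (size mu <= size A)%N by rewrite size_mult_profile size_undup.
have ln_gt0 : 0 < ln ((size A)%:R : R).
  by rewrite ln_gt0 // ltr1n (leq_trans mu_gt1 mu_le).
rewrite ler_pdivrMr // size_takel //; apply: (le_trans M_le).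
rewrite ler_wpM2l // ler_ln ?posrE ?ltr0n ?ler_nat //.
  exact: ltnW mu_gt1.
exact: leq_trans (ltnW mu_gt1) mu_le.
Qed.
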